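(* Let $m,v,x,y$ be nonzero real numbers, let $s>0$ and let $u,w\in\mathbb{R}$. Let $\mathfrak{n}$ be the five-dimensional real Lie algebra with basis $\{E_1,\dots,E_5\}$ whose only non-vanishing brackets (up to antisymmetry) are $$[E_1,E_2]=mE_3+sE_4+uE_5,\qquad [E_1,E_3]=vE_4+wE_5,\qquad [E_1,E_4]=xE_5,\qquad [E_2,E_3]=yE_5.$$ Equip the corresponding simply connected nilpotent Lie group with the left-invariant Riemannian metric for which $\{E_1,\dots,E_5\}$ is orthonormal. Then this metric is not an algebraic Ricci soliton.
   Context: Let $G$ be a Lie group with Lie algebra $\mathfrak{g}$ and let $g$ be a left-invariant Riemannian metric on $G$. Let $\mathrm{Ric}$ denote the $(1,1)$ Ricci tensor of $g$, viewed as a linear endomorphism of $\mathfrak{g}$. The metric $g$ is an algebraic Ricci soliton if there are a real number $c$ and a derivation $D$ of $\mathfrak{g}$ such that $\mathrm{Ric}=c\,\mathrm{Id}+D$. *)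

(* A 5-dimensional real Lie algebra is encoded by its structure constants
   C i j k = coefficient of E_k in [E_i, E_j], indices 0..4 (E_1..E_5 of the
   paper correspond to indices 0..4). The left-invariant metric is the one
   making (E_i) orthonormal, so all tensors are given by their components. *)
From Stdlib Require Import Reals Lra.
Open Scope R_scope.

Definition sum5 (f : nat -> R) : R := f 0%nat + f 1%nat + f 2%nat + f 3%nat + f 4%nat.

(* Levi-Civita connection (Koszul formula, orthonormal left-invariant frame):
   g(nabla_{E_i} E_j, E_k) = 1/2 ( g([E_i,E_j],E_k) - g([E_j,E_k],E_i) + g([E_k,E_i],E_j) ). *)
Definition Gam (C : nat -> nat -> nat -> R) (i j k : nat) : R :=
  / 2 * (C i j k - C j k i + C k i j).

(* Curvature R(X,Y)Z = nabla_X nabla_Y Z - nabla_Y nabla_X Z - nabla_[X,Y] Z;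
   Curv C a b c l = E_l-component of R(E_a,E_b)E_c. *)
Definition Curv (C : nat -> nat -> nat -> R) (a b c l : nat) : R :=
  sum5 (fun k => Gam C b c k * Gam C a k l - Gam C a c k * Gam C b k l
                 - C a b k * Gam C k c l).

(* Ricci tensor ric(Y,Z) = trace (X |-> R(X,Y)Z). Since the frame is orthonormal,
   the (1,1) Ricci endomorphism has matrix entries Ric C i j = ric(E_i,E_j)
   (E_i-component of Ric(E_j)). *)
Definition Ric (C : nat -> nat -> nat -> R) (i j : nat) : R :=
  sum5 (fun a => Curv C a j i a).

(* A linear endomorphism D of the algebra, D(E_j) = sum_i D i j E_i, is a derivation
   iff D[E_a,E_b] = [D E_a, E_b] + [E_a, D E_b] for all basis vectors. *)
Definition is_derivation (C : nat -> nat -> nat -> R) (D : nat -> nat -> R) : Prop :=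
  forall a b k : nat, (a < 5)%nat -> (b < 5)%nat -> (k < 5)%nat ->
    sum5 (fun l => C a b l * D k l) =
    sum5 (fun l => D l a * C l b k) + sum5 (fun l => D l b * C a l k).

Definition algebraic_ricci_soliton (C : nat -> nat -> nat -> R) : Prop :=
  exists (c : R) (D : nat -> nat -> R), is_derivation C D /\
    forall i j : nat, (i < 5)%nat -> (j < 5)%nat ->
      Ric C i j = c * (if Nat.eqb i j then 1 else 0) + D i j.

Local Open Scope nat_scope.
Definition nC (m s u v w x y : R) (i j k : nat) : R :=
  match i, j, k with
  | 0, 1, 2 => m%R | 0, 1, 3 => s | 0, 1, 4 => u
  | 1, 0, 2 => - m | 1, 0, 3 => - s | 1, 0, 4 => - u
  | 0, 2, 3 => v | 0, 2, 4 => w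
  | 2, 0, 3 => - v | 2, 0, 4 => - w
  | 0, 3, 4 => x | 3, 0, 4 => - x
  | 1, 2, 4 => y | 2, 1, 4 => - y
  | _, _, _ => 0%R
  end.

(* Every
   derivation preserves the derived algebra, here span(E3, E4, E5), so the
   E1- and E2-components of Ric [E1, E2] must vanish (the c Id part
   contributes nothing off the diagonal).  For this algebra these components
   are m u y / 2 and -(m s v + m u w + s u x) / 2: the first forces u = 0, and
   then the second forces m s v = 0, which is impossible. *)

From Stdlib Require Import Reals Lra Lia.
Open Scope R_scope.

Lemma sum5_mul_kronecker (f : nat -> R) (c : R) (k : nat) : (k < 5)%nat ->
  sum5 (fun l => f l * (c * (if Nat.eqb k l then 1 else 0))) = c * f k.
Proof.
  intros Hk; unfold sum5.
  destruct k as [|[|[|[|[|k]]]]]; try lia; simpl; ring.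
Qed.

Lemma derivation_preserves_derived_component (C : nat -> nat -> nat -> R)
    (D : nat -> nat -> R) (k a b : nat) :
  is_derivation C D ->
  (forall i j, C i j k = 0) ->
  (a < 5)%nat -> (b < 5)%nat -> (k < 5)%nat ->
  sum5 (fun l => C a b l * D k l) = 0.
Proof.
  intros Hder Hk Ha Hb Hk5.
  rewrite (Hder a b k Ha Hb Hk5); unfold sum5; rewrite !Hk; ring.
Qed.

Lemma soliton_ricci_derived_component (C : nat -> nat -> nat -> R) (k a b : nat) :
  algebraic_ricci_soliton C ->
  (forall i j, C i j k = 0) ->
  (a < 5)%nat -> (b < 5)%nat -> (k < 5)%nat ->
  sum5 (fun l => C a b l * Ric C k l) = 0.
Proof.
  intros [c [D [Hder Hric]]] Hk Ha Hb Hk5.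
  pose proof (derivation_preserves_derived_component C D k a b Hder Hk Ha Hb Hk5) as HD.
  assert (Hsplit : sum5 (fun l => C a b l * Ric C k l)
           = sum5 (fun l => C a b l * (c * (if Nat.eqb k l then 1 else 0)))
             + sum5 (fun l => C a b l * D k l)).
  { unfold sum5; rewrite !(Hric k) by lia; ring. }
  rewrite Hsplit, HD, sum5_mul_kronecker, Hk by exact Hk5; ring.
Qed.

Section FiveDimensionalAlgebra.

Variables m s u v w x y : R.

Lemma nC_E1_not_in_derived (i j : nat) : nC m s u v w x y i j 0 = 0.
Proof.
  destruct i as [|[|[|[|i]]]]; destruct j as [|[|[|[|j]]]]; reflexivity.
Qed.

Lemma nC_E2_not_in_derived (i j : nat) : nC m s u v w x y i j 1 = 0.
Proof.
  destruct i as [|[|[|[|i]]]]; destruct j as [|[|[|[|j]]]]; reflexivity.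
Qed.

Lemma nC_ricci_E1_component_bracket12 :
  sum5 (fun l => nC m s u v w x y 0 1 l * Ric (nC m s u v w x y) 0 l)
  = m * u * y / 2.
Proof. unfold Ric, Curv, Gam, sum5, nC; simpl; field. Qed.

Lemma nC_ricci_E2_component_bracket12 :
  sum5 (fun l => nC m s u v w x y 0 1 l * Ric (nC m s u v w x y) 1 l)
  = - (m * s * v + m * u * w + s * u * x) / 2.
Proof. unfold Ric, Curv, Gam, sum5, nC; simpl; field. Qed.

End FiveDimensionalAlgebra.

Theorem mainTheorem7 (m s u v w x y : R)
  (hm : m <> 0) (hv : v <> 0) (hx : x <> 0) (hy : y <> 0) (hs : 0 < s) :
  ~ algebraic_ricci_soliton (nC m s u v w x y).
Proof.
  intros Hsol.
  pose proof (soliton_ricci_derived_component _ 0 0 1 Hsol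
                (nC_E1_not_in_derived m s u v w x y) ltac:(lia) ltac:(lia) ltac:(lia)) as H1.
  pose proof (soliton_ricci_derived_component _ 1 0 1 Hsol
                (nC_E2_not_in_derived m s u v w x y) ltac:(lia) ltac:(lia) ltac:(lia)) as H2.
  rewrite nC_ricci_E1_component_bracket12 in H1.
  rewrite nC_ricci_E2_component_bracket12 in H2.
  assert (Hu : u = 0).
  { destruct (Req_dec u 0) as [Hu | Hu]; [exact Hu | exfalso].
    assert (Hmuy : m * u * y <> 0)
      by (repeat apply Rmult_integral_contrapositive_currified; assumption).
    lra. }
  subst u.
  assert (Hmsv : m * s * v <> 0)
    by (repeat apply Rmult_integral_contrapositive_currified; lra).
  lra.
Qed.
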